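(* Let $W=\langle w_1,\dots,w_n\rangle$ be a weave. (i) If $|V(W)|\ge 3$ and $W$ is prime, then $W$ is isomorphic to $T_m$ or $U_m$ for some odd $m$. (ii) If $|V(W)|\ge 2$, $v\notin V(W)$ is a vertex such that $v\to w_i$ for all odd $i$ and $w_i\to v$ for all even $i$, and the tournament $W+v$ on $V(W)\cup\{v\}$ is prime, then $W+v$ is isomorphic to $T_m$, $U_m$, or $W_m$ for some odd $m$.
   Context: A tournament is a finite, non-null, loopless directed graph in which for any two distinct vertices $u,v$ there is exactly one edge with both ends in $\{u,v\}$; write $u\to v$ for the edge from $u$ to $v$, and $X\Rightarrow Y$ if $x\to y$ for all $x\in X,y\in Y$. A homogeneous set of $G$ is a set $X\subseteq V(G)$ such that each vertex outside $X$ either has edges to all of $X$ or edges from all of $X$; $G$ is prime if every homogeneous set $X$ has $|X|\le 1$ or $X=V(G)$. A weave $\langle w_1,\dots,w_n\rangle$ is a tournament on $w_1,\dots,w_n$ such that: $w_i\to w_j$ whenever $i<j$ and $i,j$ have opposite parity; either $w_i\to w_j$ for all $i<j$ both odd, or $w_j\to w_i$ for all $i<j$ both odd; and either $w_i\to w_j$ for all $i<j$ both even, or $w_j\to w_i$ for all $i<j$ both even. For $m=2k+1$: $T_m$ is the tournament on $v_1,\dots,v_m$ with $v_i\to v_j$ iff $j\equiv i+1,\dots,i+k\pmod m$; $U_m$ is obtained from $T_m$ by reversing all edges with both ends in $\{v_1,\dots,v_k\}$; $W_m$ is the tournament on $x_1,\dots,x_m$ with $x_i\to x_j$ for $1\le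 i<j\le m-1$ and $\{x_2,x_4,\dots,x_{m-1}\}\Rightarrow x_m\Rightarrow\{x_1,x_3,\dots,x_{m-2}\}$. *)

From mathcomp Require Import all_boot.
Set Implicit Arguments. Unset Strict Implicit. Unset Printing Implicit Defensive.

(* A tournament on a finite type T given by its edge relation adj (adj u v = "u -> v"):
   non-null, loopless, exactly one edge between two distinct vertices. *)
Definition is_tournament (T : finType) (adj : rel T) : Prop :=
  0 < #|T| /\ (forall x, ~~ adj x x) /\ (forall x y, x != y -> adj x y != adj y x).

Definition homogeneous (T : finType) (adj : rel T) (X : {set T}) : Prop :=
  forall v, v \notin X -> (forall x, x \in X -> adj v x) \/ (forall x, x \in X -> adj x v).

Definition prime_tournament (T : finType) (adj : rel T) : Prop :=
  forall X : {set T}, homogeneous adj X -> #|X| <= 1 \/ X = [set: T].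

Definition tour_iso (T T' : finType) (adj : rel T) (adj' : rel T') : Prop :=
  exists f : T -> T', bijective f /\ forall x y, adj x y = adj' (f x) (f y).

(* w : 'I_n -> T lists the distinct vertices w_1,...,w_n (w_i = w (i-1)) of a subtournament
   of (T, adj), and that subtournament (induced on the image of w) is the weave <w_1,...,w_n>.
   Parities below refer to the 1-based index i = k.+1 of w k. *)
Definition weave_on (T : finType) (adj : rel T) (n : nat) (w : 'I_n -> T) : Prop :=
  injective w /\
  (forall i j : 'I_n, i < j -> odd i.+1 != odd j.+1 -> adj (w i) (w j)) /\
  ((forall i j : 'I_n, i < j -> odd i.+1 -> odd j.+1 -> adj (w i) (w j)) \/
   (forall i j : 'I_n, i < j -> odd i.+1 -> odd j.+1 -> adj (w j) (w i))) /\
  ((forall i j : 'I_n, i < j -> ~~ odd i.+1 -> ~~ odd j.+1 -> adj (w i) (w j)) \/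
   (forall i j : 'I_n, i < j -> ~~ odd i.+1 -> ~~ odd j.+1 -> adj (w j) (w i))).

(* T_m on v_1..v_m, encoded 0-based as 'I_m (v_{k+1} = k): v_i -> v_j iff
   j - i mod m lies in {1,...,(m-1)/2}. *)
Definition Tadj (m : nat) : rel 'I_m :=
  fun i j => let d := (j + m - i) %% m in (1 <= d) && (d <= m./2).

(* U_m: reverse the edges of T_m with both ends in {v_1,...,v_k}, k = (m-1)/2. *)
Definition Uadj (m : nat) : rel 'I_m :=
  fun i j => if (i < m./2) && (j < m./2) then Tadj j i else Tadj i j.

(* W_m on x_1..x_m, encoded 0-based (x_{k+1} = k; x_m = m-1):
   x_i -> x_j for i<j<=m-1; x_i -> x_m for i even (1-based); x_m -> x_i for i odd (1-based), i < m. *)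
Definition Wadj (m : nat) : rel 'I_m :=
  fun i j =>
    if (j == m.-1 :> nat) && (i < m.-1) then odd i        (* 1-based index i.+1 even *)
    else if (i == m.-1 :> nat) && (j < m.-1) then ~~ odd j (* 1-based index j.+1 odd *)
    else i < j.

(* A weave is determined by the orientations of its two parity classes.  If the
   class of w_1 is oriented forwards, w_1 is a source.  Otherwise, for odd n the
   weave is a relabelling of T_n or U_n, and for even n either w_n is a sink or
   {w_1, w_n} is homogeneous.  For W + v: if the class of w_2 is oriented
   backwards, putting v in front of w_1 yields a weave again; otherwise
   depending on the parity of n and the orientation of the class of w_1, either
   v appended at the end yields a weave, or W + v is W_(n+1), or w_n is a sink,
   or {w_n, v} is homogeneous.  A source, a sink or a homogeneous pair
   contradicts primality. *)

From mathcomp Require Import all_boot zify.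
Set Implicit Arguments. Unset Strict Implicit. Unset Printing Implicit Defensive.

Lemma tournament_antisym (T : finType) (adj : rel T) x y :
  is_tournament adj -> x != y -> adj y x = ~~ adj x y.
Proof. by case=> _ [_ adj_tour] /adj_tour; case: (adj x y); case: (adj y x). Qed.

Section Representation.
Variables (T : finType) (adj : rel T).

Definition represents (N : nat) (R : rel nat) (h : nat -> T) : Prop :=
  [/\ forall i j, i < N -> j < N -> h i = h j -> i = j,
      forall x, exists2 i, i < N & x = h i
    & forall i j, i < N -> j < N -> adj (h i) (h j) = R i j].

Lemma represents_reindex N R R' h (g : nat -> nat) :
  represents N R h ->
  (forall a, a < N -> g a < N) ->
  (forall a b, a < N -> b < N -> g a = g b -> a = b) ->
  (forall i, i < N -> exists2 a, a < N & i = g a) ->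
  (forall a b, a < N -> b < N -> R (g a) (g b) = R' a b) ->
  represents N R' (h \o g).
Proof.
move=> [h_inj h_cover h_adj] g_lt g_inj g_onto gR.
split=> [a b aN bN /= /h_inj | x | a b aN bN /=].
- by move/(_ (g_lt a aN) (g_lt b bN)); exact: g_inj.
- by have [i iN ->] := h_cover x; have [a aN ->] := g_onto i iN; exists a.
- by rewrite h_adj ?g_lt // gR.
Qed.

Lemma represents_iso N R h (R' : rel 'I_N) :
  represents N R h -> (forall a b : 'I_N, R a b = R' a b) -> tour_iso adj R'.
Proof.
move=> [h_inj h_cover h_adj] RR'.
pose F (a : 'I_N) := h a.
have F_inj : injective F by move=> a b /h_inj eq_ab; apply/val_inj/eq_ab.
have [Fi FK FiK] : bijective F.
  apply: (inj_card_bij F_inj); rewrite -(card_codom F_inj).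
  apply/subset_leq_card/subsetP => x _; have [i iN ->] := h_cover x.
  exact: (codom_f F (Ordinal iN)).
exists Fi; split; first by exists F.
by move=> x y; rewrite -{1}(FiK x) -{1}(FiK y) /F h_adj // RR'.
Qed.

Lemma represents_not_prime N R h (I : pred nat) a b c :
  represents N R h -> a < N -> b < N -> c < N -> a != b ->
  I a -> I b -> ~~ I c ->
  (forall j, j < N -> ~~ I j ->
     (forall i, i < N -> I i -> R j i) \/ (forall i, i < N -> I i -> R i j)) ->
  ~ prime_tournament adj.
Proof.
move=> [h_inj h_cover h_adj] aN bN cN ab Ia Ib Ic I_hom prime_adj.
pose X := [set h i | i : 'I_N & I i].
have inX i : i < N -> I i -> h i \in X.
  by move=> iN Ii; apply/imsetP; exists (Ordinal iN); rewrite ?inE.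
have X_hom : homogeneous adj X.
  move=> x xX; have [j jN def_x] := h_cover x.
  have Ij : ~~ I j by apply: contraNN xX; rewrite def_x; exact: inX.
  rewrite /X def_x; case: (I_hom j jN Ij) => [to_I | from_I]; [left | right];
    move=> _ /imsetP[i /[!inE] Ii ->]; rewrite h_adj //; [exact: to_I | exact: from_I].
case: (prime_adj X X_hom) => [X_le1 | X_full].
  have : 1 < #|X|.
    apply/card_gt1P; exists (h a), (h b); rewrite !inX //; split=> //.
    by apply: contra ab => /eqP/h_inj ->.
  by rewrite ltnNge X_le1.
have /imsetP[i /[!inE] Ii hci] : h c \in X by rewrite X_full inE.
by move: Ic; rewrite (h_inj _ _ cN (ltn_ord i) hci) Ii.
Qed.

End Representation.

(* Indices are 0-based: [fe] orients the class w_1, w_3, ... and [fo] the class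
   w_2, w_4, ..., [true] meaning from smaller to larger index. *)
Definition weave_rel (fe fo : bool) (i j : nat) : bool :=
  (i != j) && if odd i == odd j then
                (if odd i then (if fo then i < j else j < i) else (if fe then i < j else j < i))
              else i < j.

(* W + v, with v at index N. *)
Definition weave_ext_rel (fe fo : bool) (N i j : nat) : bool :=
  if (i < N) && (j < N) then weave_rel fe fo i j
  else if (i == N) && (j < N) then ~~ odd j
  else (i < N) && (j == N) && odd i.

Ltac weave_arith := rewrite /= ?/weave_ext_rel /weave_rel /=; repeat case: ifP; lia.

Lemma weave_rel_antisym fe fo i j : i != j -> weave_rel fe fo j i = ~~ weave_rel fe fo i j.
Proof. by case: fe; case: fo; weave_arith. Qed.

Section WeaveOn.
Variables (T : finType) (adj : rel T) (n : nat) (w : 'I_n.+1 -> T).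
Hypotheses (adj_tour : is_tournament adj) (weave_w : weave_on adj w).

Lemma weave_antisym (i j : 'I_n.+1) : i != j -> adj (w j) (w i) = ~~ adj (w i) (w j).
Proof.
have [w_inj _] := weave_w.
by move=> ij; apply: tournament_antisym => //; apply: contra ij => /eqP/w_inj ->.
Qed.

Lemma weave_class_orientation (P : nat -> bool) :
  (forall i j : 'I_n.+1, i < j -> P i -> P j -> adj (w i) (w j)) \/
  (forall i j : 'I_n.+1, i < j -> P i -> P j -> adj (w j) (w i)) ->
  exists f : bool, forall i j : 'I_n.+1, i < j -> P i -> P j -> adj (w i) (w j) = f.
Proof.
case=> dir; [exists true | exists false] => i j lt_ij Pi Pj; first exact: dir.
rewrite -[adj _ _]negbK -weave_antisym ?dir //.
by apply: contraTneq lt_ij => ->; rewrite ltnn.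
Qed.

Lemma weave_rel_of_weave_on :
  exists fe fo, forall i j : 'I_n.+1, adj (w i) (w j) = weave_rel fe fo i j.
Proof.
have [_ [w_alt [w_even w_odd]]] := weave_w; have [_ [adj_irr _]] := adj_tour.
have [fe fe_dir] := weave_class_orientation (P := fun k => odd k.+1) w_even.
have [fo fo_dir] := weave_class_orientation (P := fun k => ~~ odd k.+1) w_odd.
have lt_case (i j : 'I_n.+1) : i < j -> adj (w i) (w j) = weave_rel fe fo i j.
  move=> lt_ij; rewrite /weave_rel neq_ltn lt_ij /=.
  case oi: (odd i); case oj: (odd j) => /=.
  - by rewrite fo_dir /= ?oi ?oj //; case: (fo); lia.
  - by rewrite w_alt //= oi oj.
  - by rewrite w_alt //= oi oj.
  - by rewrite fe_dir /= ?oi ?oj //; case: (fe); lia.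
exists fe, fo => i j; case: (ltngtP i j) => [lt_ij | gt_ij | eq_ij].
- exact: lt_case.
- have ji : (j : nat) != i by rewrite neq_ltn gt_ij.
  by rewrite weave_antisym ?lt_case // (weave_rel_antisym _ _ ji).
- by rewrite (val_inj eq_ij) (negbTE (adj_irr _)); weave_arith.
Qed.

Lemma represents_weave :
  (forall x, exists i, x = w i) ->
  exists fe fo, represents adj n.+1 (weave_rel fe fo) (fun i => w (inord i)).
Proof.
move=> w_onto; have [fe [fo w_rel]] := weave_rel_of_weave_on.
have [w_inj _] := weave_w.
exists fe, fo; split=> [i j i_lt j_lt /w_inj/(congr1 (@nat_of_ord _)) | x | i j i_lt j_lt].
- by rewrite !inordK.
- by have [i ->] := w_onto x; exists i; rewrite ?inord_val.
- by rewrite w_rel !inordK.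
Qed.

Lemma represents_weave_ext v :
  (forall i, w i != v) -> (forall x, x = v \/ exists i, x = w i) ->
  (forall i : 'I_n.+1, odd i.+1 -> adj v (w i)) ->
  (forall i : 'I_n.+1, ~~ odd i.+1 -> adj (w i) v) ->
  exists fe fo, represents adj n.+2 (weave_ext_rel fe fo n.+1)
                  (fun i => if i < n.+1 then w (inord i) else v).
Proof.
move=> w_neq_v cover v_to to_v; have [fe [fo w_rel]] := weave_rel_of_weave_on.
have [w_inj _] := weave_w; have [_ [adj_irr _]] := adj_tour.
have adj_wv i : adj (w i) v = odd i.
  case: (boolP (odd i)) => i_odd; first by apply: to_v; rewrite /= i_odd.
  by apply/negbTE; rewrite -tournament_antisym // v_to.
have adj_vw i : adj v (w i) = ~~ odd i by rewrite tournament_antisym // adj_wv.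
exists fe, fo; split=> [i j i_lt j_lt | x | i j i_lt j_lt].
- case: ltnP => i_le; case: ltnP => j_le; try lia.
  + by move/w_inj/(congr1 (@nat_of_ord _)); rewrite !inordK.
  + by move=> eq_wv; case/eqP: (w_neq_v (inord i)).
  + by move=> eq_vw; case/eqP: (w_neq_v (inord j)).
- case: (cover x) => [-> | [i ->]]; first by exists n.+1; rewrite ?ltnn.
  by exists i; [exact: (ltnW (ltn_ord i)) | rewrite ltn_ord inord_val].
- have [i_small | ->] : i < n.+1 \/ i = n.+1 by lia.
  all: have [j_small | ->] : j < n.+1 \/ j = n.+1 by lia.
  all: rewrite /weave_ext_rel ?i_small ?j_small ?ltnn ?eqxx ?andbF /=.
  + by rewrite w_rel !inordK.
  + by rewrite adj_wv inordK.
  + by rewrite adj_vw inordK.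
  + by rewrite (negbTE (adj_irr v)).
Qed.

End WeaveOn.

Lemma modn_lt_double x m : x < m + m -> x %% m = if x < m then x else x - m.
Proof.
case: ifP => [x_lt _ | x_ge x_lt]; first by rewrite modn_small.
have -> : x = x - m + m by lia.
by rewrite modnDr modn_small; lia.
Qed.

(* With k = m./2, T_m is the weave <v_m, v_k, v_(m-1), v_(k-1), ..., v_1, v_(k+1)>
   with both classes oriented backwards, and U_m the same sequence with the
   class of w_2 oriented forwards; [Tpos m a] is the 0-based position of v_(a+1). *)
Definition Tpos (m a : nat) : nat :=
  if a < m./2 then (m./2 - 1 - a).*2.+1 else (m - 1 - a).*2.

Section TPositions.
Variables (m : nat) (m_odd : odd m).

Lemma Tpos_lt a : a < m -> Tpos m a < m.
Proof. rewrite /Tpos; case: ifP; lia. Qed.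

Lemma Tpos_inj a b : a < m -> b < m -> Tpos m a = Tpos m b -> a = b.
Proof. rewrite /Tpos; case: ifP; case: ifP; lia. Qed.

Lemma Tpos_onto i : i < m -> exists2 a, a < m & i = Tpos m a.
Proof.
move=> i_lt; exists (if odd i then m./2 - 1 - i./2 else m - 1 - i./2);
  rewrite /Tpos; repeat case: ifP; lia.
Qed.

Lemma weave_rel_Tpos (a b : 'I_m) : weave_rel false false (Tpos m a) (Tpos m b) = Tadj a b.
Proof.
have a_lt := ltn_ord a; have b_lt := ltn_ord b.
rewrite /Tadj modn_lt_double; last by lia.
rewrite /weave_rel /Tpos; repeat case: ifP; lia.
Qed.

Lemma weave_rel_Tpos_U (a b : 'I_m) : weave_rel false true (Tpos m a) (Tpos m b) = Uadj a b.
Proof.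
have a_lt := ltn_ord a; have b_lt := ltn_ord b.
rewrite /Uadj /Tadj !modn_lt_double; try lia.
rewrite /weave_rel /Tpos; repeat case: ifP; lia.
Qed.

End TPositions.

Section PrimeWeave.
Variables (T : finType) (adj : rel T).

Lemma prime_weave_isoTU N fe fo h :
  represents adj N (weave_rel fe fo) h -> 3 <= N -> prime_tournament adj ->
  exists m, odd m /\ (tour_iso adj (@Tadj m) \/ tour_iso adj (@Uadj m)).
Proof.
move=> rep N_ge3 prime_adj; case: fe rep => rep.
  (* the first vertex is a source *)
  case: (represents_not_prime (I := predC1 0) (a := 1) (b := 2) (c := 0) rep) => //=; try lia.
  by move=> j j_lt /negPn/eqP ->; left=> i i_lt /= i_neq0; weave_arith.
case N_odd: (odd N).
  exists N; split=> //.
  have rep_T : represents adj N (fun a b => weave_rel false fo (Tpos N a) (Tpos N b)) (h \o Tpos N).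
    exact: represents_reindex rep (Tpos_lt N_odd) (Tpos_inj N_odd) (Tpos_onto N_odd) _.
  case: fo {rep} rep_T => rep_T; [right | left]; apply: represents_iso rep_T _ => a b.
  - exact: weave_rel_Tpos_U.
  - exact: weave_rel_Tpos.
case: fo rep => rep.
  (* the last vertex is a sink *)
  case: (represents_not_prime (I := predC1 N.-1) (a := 0) (b := 1) (c := N.-1) rep) => //=; try lia.
  by move=> j j_lt /negPn/eqP ->; right=> i i_lt /= i_neq; weave_arith.
(* the first and the last vertex are twins *)
case: (represents_not_prime (I := pred2 0 N.-1) (a := 0) (b := N.-1) (c := 1) rep) => //=; try lia.
move=> j j_lt; rewrite negb_or => /andP[j_neq0 j_neq]; case: (boolP (odd j)) => j_odd;
  [right | left] => i i_lt /orP[] /eqP ->; weave_arith.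
Qed.

Lemma prime_weave_ext_isoTUW N fe fo h :
  represents adj N.+1 (weave_ext_rel fe fo N) h -> 2 <= N -> prime_tournament adj ->
  exists m, odd m /\
    (tour_iso adj (@Tadj m) \/ tour_iso adj (@Uadj m) \/ tour_iso adj (@Wadj m)).
Proof.
move=> rep N_ge2 prime_adj.
have isoTU_isoTUW : (exists m, odd m /\ (tour_iso adj (@Tadj m) \/ tour_iso adj (@Uadj m))) ->
    exists m, odd m /\
      (tour_iso adj (@Tadj m) \/ tour_iso adj (@Uadj m) \/ tour_iso adj (@Wadj m)).
  by case=> m [m_odd [iso | iso]]; exists m; tauto.
case: fo rep => rep; last first.
  (* v in front of the weave *)
  pose rot i := if i == 0 then N else i.-1.
  suff rep_rot : represents adj N.+1 (weave_rel false fe) (h \o rot).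
    exact/isoTU_isoTUW/(prime_weave_isoTU rep_rot N_ge2 prime_adj).
  apply: represents_reindex rep _ _ _ _; rewrite /rot.
  - by move=> i; case: ifP; lia.
  - by move=> i j; repeat case: ifP; lia.
  - by move=> i i_lt; exists (if i == N then 0 else i.+1); repeat case: ifP; lia.
  - by move=> i j i_lt j_lt; case: (fe); weave_arith.
case: fe rep => rep; case N_odd: (odd N).
- (* the last vertex of the weave is a sink *)
  case: (represents_not_prime (I := predC1 N.-1) (a := 0) (b := N) (c := N.-1) rep) => //=; try lia.
  by move=> j j_lt /negPn/eqP ->; right=> i i_lt /= i_neq; weave_arith.
- exists N.+1; split; first by rewrite /= N_odd.
  right; right; apply: represents_iso rep _ => a b.
  by have := ltn_ord a; have := ltn_ord b; rewrite /Wadj; weave_arith.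
- (* v and the last vertex of the weave are twins *)
  case: (represents_not_prime (I := pred2 N.-1 N) (a := N.-1) (b := N) (c := 0) rep) => //=; try lia.
  move=> j j_lt; rewrite negb_or => /andP[j_neq j_neqN]; case: (boolP (odd j)) => j_odd;
    [left | right] => i i_lt /orP[] /eqP ->; weave_arith.
- (* v at the end of the weave *)
  suff rep_end : represents adj N.+1 (weave_rel false true) (h \o id).
    exact/isoTU_isoTUW/(prime_weave_isoTU rep_end N_ge2 prime_adj).
  apply: represents_reindex rep _ _ _ _ => //; first by move=> i; exists i.
  by move=> i j i_lt j_lt; weave_arith.
Qed.

End PrimeWeave.

Theorem corollary3p3 :
  (* (i) *)
  (forall (T : finType) (adj : rel T) (n : nat) (w : 'I_n -> T),
      is_tournament adj -> weave_on adj w -> bijective w ->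
      3 <= #|T| -> prime_tournament adj ->
      exists m : nat, odd m /\ (tour_iso adj (@Tadj m) \/ tour_iso adj (@Uadj m))) /\
  (* (ii): (T, adj) is W+v, where W is the weave induced on the image of w *)
  (forall (T : finType) (adj : rel T) (n : nat) (w : 'I_n -> T) (v : T),
      is_tournament adj -> weave_on adj w ->
      (forall i, w i != v) -> (forall x, x = v \/ exists i, x = w i) ->
      2 <= n ->
      (forall i : 'I_n, odd i.+1 -> adj v (w i)) ->
      (forall i : 'I_n, ~~ odd i.+1 -> adj (w i) v) ->
      prime_tournament adj ->
      exists m : nat, odd m /\
        (tour_iso adj (@Tadj m) \/ tour_iso adj (@Uadj m) \/ tour_iso adj (@Wadj m))).
Proof.
split=> [T adj n w adj_tour weave_w w_bij
        | T adj [//|n] w v adj_tour weave_w w_neq_v cover n_ge2 v_to to_v].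
  rewrite -(bij_eq_card w_bij) card_ord.
  case: n w adj_tour weave_w w_bij => [//|n] w adj_tour weave_w [wi _ wiK].
  have w_onto x : exists i, x = w i by exists (wi x).
  have [fe [fo rep]] := represents_weave adj_tour weave_w w_onto.
  exact: prime_weave_isoTU rep.
have [fe [fo rep]] := represents_weave_ext adj_tour weave_w w_neq_v cover v_to to_v.
exact: prime_weave_ext_isoTUW rep n_ge2.
Qed.
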